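(* Let $X$ be an admissible complete CAT(1) space and $T\colon X\to X$ a vicinal mapping. Then $\mathrm{Fix}(T)$ is nonempty if and only if there exists $x\in X$ such that the sequence $\{T^nx\}$ is spherically bounded and $\sup_{n\in\mathbb N} d(T^nx,T^{n-1}x)<\pi/2$.
   Context: A CAT(1) space is a $\pi$-geodesic metric space in which every geodesic triangle of perimeter $<2\pi$ satisfies the CAT(1) comparison inequality relative to its comparison triangle in the unit sphere $\mathbb S^2$ with spherical metric. It is admissible if $d(v,v')<\pi/2$ for all $v,v'\in X$. A sequence $\{x_n\}$ is spherically bounded if $\inf_{y\in X}\limsup_{n\to\infty} d(x_n,y)<\pi/2$. $\mathrm{Fix}(T)=\{u: Tu=u\}$. With $C_z=\cos d(Tz,z)$, $T$ is vicinal if for all $x,y\in X$: $\bigl(C_x^2(1+C_y^2)+C_y^2(1+C_x^2)\bigr)\cos d(Tx,Ty)\ge C_x^2(1+C_y^2)\cos d(Tx,y)+C_y^2(1+C_x^2)\cos d(Ty,x)$. *)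

From Stdlib Require Import Reals.
Open Scope R_scope.

Definition is_metric {X : Type} (d : X -> X -> R) : Prop :=
  (forall x y, 0 <= d x y) /\
  (forall x y, d x y = 0 <-> x = y) /\
  (forall x y, d x y = d y x) /\
  (forall x y z, d x z <= d x y + d y z).

Definition geodesic {X : Type} (d : X -> X -> R) (c : R -> X) (x y : X) : Prop :=
  c 0 = x /\ c (d x y) = y /\
  forall s t, 0 <= s <= d x y -> 0 <= t <= d x y -> d (c s) (c t) = Rabs (s - t).

Definition pi_geodesic {X : Type} (d : X -> X -> R) : Prop :=
  forall x y, d x y < PI -> exists c, geodesic d c x y.

Definition R3 : Type := (R * R * R)%type.
Definition dot3 (a b : R3) : R :=
  let '(a1, a2, a3) := a in let '(b1, b2, b3) := b in a1 * b1 + a2 * b2 + a3 * b3.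
Definition on_S2 (a : R3) : Prop := dot3 a a = 1.
Definition dS2 (a b : R3) : R := acos (dot3 a b).

(** ub is the comparison point, on the S^2-side from ab to bb (of length L),
    at distance s from ab. *)
Definition cmp_pt (ab bb : R3) (L s : R) (ub : R3) : Prop :=
  on_S2 ub /\ dS2 ab ub = s /\ dS2 ub bb = L - s.

Definition tri_pt {X : Type} (d : X -> X -> R) (p q r : X) (c1 c2 c3 : R -> X)
    (pb qb rb : R3) (u : X) (ub : R3) : Prop :=
  exists s,
    (0 <= s <= d p q /\ u = c1 s /\ cmp_pt pb qb (d p q) s ub) \/
    (0 <= s <= d q r /\ u = c2 s /\ cmp_pt qb rb (d q r) s ub) \/
    (0 <= s <= d r p /\ u = c3 s /\ cmp_pt rb pb (d r p) s ub).

Definition cat1_inequality {X : Type} (d : X -> X -> R) : Prop :=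
  forall (p q r : X) (c1 c2 c3 : R -> X),
    geodesic d c1 p q -> geodesic d c2 q r -> geodesic d c3 r p ->
    d p q + d q r + d r p < 2 * PI ->
    forall pb qb rb : R3,
      on_S2 pb -> on_S2 qb -> on_S2 rb ->
      dS2 pb qb = d p q -> dS2 qb rb = d q r -> dS2 rb pb = d r p ->
      forall u v ub vb,
        tri_pt d p q r c1 c2 c3 pb qb rb u ub ->
        tri_pt d p q r c1 c2 c3 pb qb rb v vb ->
        d u v <= dS2 ub vb.

Definition CAT1_space {X : Type} (d : X -> X -> R) : Prop :=
  is_metric d /\ pi_geodesic d /\ cat1_inequality d.

Definition admissible {X : Type} (d : X -> X -> R) : Prop :=
  forall v v', d v v' < PI / 2.

Definition complete {X : Type} (d : X -> X -> R) : Prop :=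
  forall xs : nat -> X,
    (forall eps, eps > 0 -> exists N, forall m n, (m >= N)%nat -> (n >= N)%nat ->
        d (xs m) (xs n) < eps) ->
    exists l, forall eps, eps > 0 -> exists N, forall n, (n >= N)%nat -> d (xs n) l < eps.

(** inf_y limsup_n d(x_n, y) < pi/2, written out:
    there is y and c < pi/2 with d(x_n, y) <= c for all large n. *)
Definition spherically_bounded {X : Type} (d : X -> X -> R) (xs : nat -> X) : Prop :=
  exists y c, c < PI / 2 /\ exists N, forall n, (n >= N)%nat -> d (xs n) y <= c.

Definition Fix {X : Type} (T : X -> X) (u : X) : Prop := T u = u.

Definition vicinal {X : Type} (d : X -> X -> R) (T : X -> X) : Prop :=
  forall x y,
    let Cx := cos (d (T x) x) in
    let Cy := cos (d (T y) y) in
    (Cx ^ 2 * (1 + Cy ^ 2) + Cy ^ 2 * (1 + Cx ^ 2)) * cos (d (T x) (T y)) >=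
    Cx ^ 2 * (1 + Cy ^ 2) * cos (d (T x) y) + Cy ^ 2 * (1 + Cx ^ 2) * cos (d (T y) x).

From Stdlib Require Import Reals Lra Lia IndefiniteDescription Classical.
Open Scope R_scope.

(* For the orbit x_n = T^n x, consider the levels t for which some z satisfies
   t <= cos d(x_n, z) for all large n, and let s > 0 be their supremum.  Comparing
   with a spherical triangle, the midpoint m of u, v satisfies
   cos d(p,u) + cos d(p,v) <= 2 cos(d(u,v)/2) cos d(p,m); so if u and v both reach
   level t then m reaches t / cos(d(u,v)/2) <= s.  Points reaching levels close to
   s are therefore close to each other, and completeness yields a unique z reaching
   every level below s.  Vicinality makes cos d(x_{n+1}, Tz) dominate a convex
   combination of cos d(x_{n+1}, z) and cos d(x_n, Tz) whose first weight is at
   least cos(sup_n d(x_{n+1}, x_n))^2 / 4 > 0, so Tz reaches every level below s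
   too, and uniqueness gives Tz = z. *)

Lemma cos_sub_cos_shift_le a e : 0 <= e <= PI -> cos a - cos (a + e) <= e.
Proof.
  intros He.
  assert (Hs : sin (e / 2) <= e / 2).
  { destruct (Req_dec e 0) as [->|]; [rewrite Rdiv_0_l, sin_0; lra|].
    left; apply sin_lt_x; lra. }
  assert (Hs0 : 0 <= sin (e / 2)) by (apply sin_ge_0; lra).
  pose proof (SIN_bound (a + e / 2)).
  rewrite form2.
  replace ((a - (a + e)) / 2) with (- (e / 2)) by field.
  replace ((a + (a + e)) / 2) with (a + e / 2) by field.
  rewrite sin_neg. nra.
Qed.

Lemma dot3_bound a b : on_S2 a -> on_S2 b -> -1 <= dot3 a b <= 1.
Proof.
  destruct a as [[a1 a2] a3], b as [[b1 b2] b3]; unfold on_S2, dot3; cbn; intros.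
  pose proof (Rle_0_sqr (a1 + b1)); pose proof (Rle_0_sqr (a2 + b2)); pose proof (Rle_0_sqr (a3 + b3)).
  pose proof (Rle_0_sqr (a1 - b1)); pose proof (Rle_0_sqr (a2 - b2)); pose proof (Rle_0_sqr (a3 - b3)).
  unfold Rsqr in *; lra.
Qed.

Lemma dS2_of_dot3 a b t : dot3 a b = cos t -> 0 <= t <= PI -> dS2 a b = t.
Proof. unfold dS2; intros -> Ht; exact (acos_cos t Ht). Qed.

Definition S2_equator (t : R) : R3 := (cos t, sin t, 0).

Lemma on_S2_equator t : on_S2 (S2_equator t).
Proof. unfold on_S2, S2_equator, dot3. pose proof (sin2_cos2 t). unfold Rsqr in *. lra. Qed.

Lemma dS2_equator s t : 0 <= t - s <= PI -> dS2 (S2_equator s) (S2_equator t) = t - s.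
Proof.
  intros; apply dS2_of_dot3; auto.
  unfold S2_equator, dot3; rewrite cos_minus; ring.
Qed.

Lemma dot3_equator_midpoint h p :
  dot3 (S2_equator 0) p + dot3 (S2_equator (2 * h)) p = 2 * cos h * dot3 (S2_equator h) p.
Proof.
  destruct p as [[p1 p2] p3]; unfold S2_equator, dot3.
  rewrite cos_0, sin_0, cos_2a_cos, sin_2a; ring.
Qed.

Lemma S2_third_vertex g al be :
  0 < g < PI -> 0 <= be -> g + be <= PI -> 0 <= al <= PI ->
  al <= g + be -> g <= be + al -> be <= al + g ->
  exists pb, on_S2 pb /\ dot3 (S2_equator g) pb = cos al /\ dot3 pb (S2_equator 0) = cos be.
Proof.
  intros Hg Hbe Hgbe Hal H1 H2 H3.
  assert (Hsg : 0 < sin g) by (apply sin_gt_0; lra).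
  assert (Hsbe : 0 <= sin be) by (apply sin_ge_0; lra).
  set (y := (cos al - cos g * cos be) / sin g).
  assert (Hy : sin g * y = cos al - cos g * cos be) by (unfold y; field; lra).
  assert (Hlo : cos (g + be) <= cos al) by (apply cos_decr_1; lra).
  assert (Hhi : cos al <= cos (g - be)).
  { destruct (Rle_dec be g).
    - apply cos_decr_1; lra.
    - replace (g - be) with (- (be - g)) by ring. rewrite cos_neg. apply cos_decr_1; lra. }
  rewrite cos_plus in Hlo. rewrite cos_minus in Hhi.
  assert (Hysq : y * y <= sin be * sin be).
  { assert (Habs : (sin g * y) * (sin g * y) <= (sin g * sin be) * (sin g * sin be)) by nra.
    apply (Rmult_le_reg_l (sin g * sin g)); nra. }
  pose proof (sin2_cos2 be) as Hbe1. unfold Rsqr in Hbe1.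
  set (z := sqrt (1 - cos be * cos be - y * y)).
  assert (Hz : z * z = 1 - cos be * cos be - y * y) by (apply sqrt_sqrt; lra).
  exists (cos be, y, z). unfold on_S2, S2_equator, dot3.
  rewrite cos_0, sin_0. repeat split; lra.
Qed.

Lemma cat1_midpoint_cos (X : Type) (d : X -> X -> R) :
  CAT1_space d -> admissible d ->
  forall u v, 0 < d u v -> exists m, forall p,
    cos (d p u) + cos (d p v) <= 2 * cos (d u v / 2) * cos (d p m).
Proof.
  intros [[hpos [_ [hsym htri]]] [hgeo hcmp]] hadm u v huv.
  pose proof PI_RGT_0 as HPI.
  set (g := d u v) in *. set (h := g / 2).
  assert (Hg : g < PI / 2) by apply hadm.
  destruct (hgeo u v) as [c1 Hc1]; [fold g; lra|].
  exists (c1 h). intros p.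
  set (al := d v p). set (be := d p u).
  assert (Hal : 0 <= al < PI / 2) by (split; [apply hpos | apply hadm]).
  assert (Hbe : 0 <= be < PI / 2) by (split; [apply hpos | apply hadm]).
  destruct (hgeo v p) as [c2 Hc2]; [fold al; lra|].
  destruct (hgeo p u) as [c3 Hc3]; [fold be; lra|].
  assert (Htri : al <= g + be /\ g <= be + al /\ be <= al + g).
  { unfold al, g, be. pose proof (htri v u p); pose proof (htri u p v); pose proof (htri p v u).
    rewrite (hsym v u), (hsym u p), (hsym p v), (hsym v p) in *. lra. }
  destruct (S2_third_vertex g al be) as [pb [Spb [Hvp Hpu]]]; try lra.
  (* With u, v placed on the equator, the comparison point of the midpoint c1 h is the
     equator point at angle h. *)
  set (ub := S2_equator 0). set (vb := S2_equator g). set (mb := S2_equator h).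
  assert (Euv : dS2 ub vb = d u v) by (unfold ub, vb; rewrite dS2_equator; fold g; lra).
  assert (Evp : dS2 vb pb = d v p) by (apply dS2_of_dot3; [exact Hvp | fold al; lra]).
  assert (Epu : dS2 pb ub = d p u) by (apply dS2_of_dot3; [exact Hpu | fold be; lra]).
  assert (Tm : tri_pt d u v p c1 c2 c3 ub vb pb (c1 h) mb).
  { exists h; left. fold g. split; [unfold h; lra|]. split; [reflexivity|].
    split; [apply on_S2_equator|].
    unfold ub, vb, mb. rewrite !dS2_equator by (unfold h; lra). split; lra. }
  assert (Tp : tri_pt d u v p c1 c2 c3 ub vb pb p pb).
  { exists 0; right; right. destruct Hc3 as [Hc30 _]. fold be.
    split; [lra|]. split; [congruence|]. split; [exact Spb|].
    unfold dS2 at 1. rewrite Spb, acos_1. split; [reflexivity|]. rewrite Epu; fold be; lra. }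
  assert (Hcmp : d (c1 h) p <= dS2 mb pb).
  { apply (hcmp u v p c1 c2 c3 Hc1 Hc2 Hc3) with (pb := ub) (qb := vb) (rb := pb); auto;
      try apply on_S2_equator.
    fold g al be; lra. }
  assert (Hcos : dot3 mb pb <= cos (d p (c1 h))).
  { pose proof (dot3_bound mb pb (on_S2_equator h) Spb).
    rewrite <- (cos_acos (dot3 mb pb)) by lra. rewrite hsym.
    pose proof (acos_bound (dot3 mb pb)). pose proof (hpos (c1 h) p).
    pose proof (hadm (c1 h) p). unfold dS2 in Hcmp. apply cos_decr_1; lra. }
  assert (Hmid : cos be + cos al = 2 * cos h * dot3 mb pb).
  { rewrite <- Hpu, <- Hvp. unfold mb, vb. rewrite <- dot3_equator_midpoint.
    replace (2 * h) with g by (unfold h; field).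
    destruct pb as [[p1 p2] p3]; unfold ub, S2_equator, dot3; ring. }
  assert (Hh : 0 < cos h) by (apply cos_gt_0; unfold h; lra).
  rewrite (hsym p v). fold al be. nra.
Qed.

Definition eventually_cos_ge {X : Type} (d : X -> X -> R) (xs : nat -> X) (z : X) (t : R) : Prop :=
  exists N, forall n, (N <= n)%nat -> t <= cos (d (xs n) z).

Section AsymptoticCenter.

Variables (X : Type) (d : X -> X -> R) (xs : nat -> X).
Hypothesis hcat : CAT1_space d.
Hypothesis hadm : admissible d.

Lemma eventually_cos_ge_weaken z t t' :
  eventually_cos_ge d xs z t -> t' <= t -> eventually_cos_ge d xs z t'.
Proof. intros [N HN] ?. exists N. intros n hn. specialize (HN n hn). lra. Qed.

Lemma eventually_cos_ge_le_1 z t : eventually_cos_ge d xs z t -> t <= 1.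
Proof. intros [N HN]. pose proof (HN N (le_n N)). pose proof (COS_bound (d (xs N) z)). lra. Qed.

Lemma eventually_cos_ge_midpoint u v t :
  eventually_cos_ge d xs u t -> eventually_cos_ge d xs v t -> 0 < d u v ->
  exists m, eventually_cos_ge d xs m (t / cos (d u v / 2)).
Proof.
  intros [N1 H1] [N2 H2] huv.
  destruct (cat1_midpoint_cos X d hcat hadm u v huv) as [m Hm].
  assert (Hh : 0 < cos (d u v / 2)) by (apply cos_gt_0; pose proof (hadm u v); lra).
  exists m, (max N1 N2). intros n hn.
  specialize (H1 n ltac:(lia)). specialize (H2 n ltac:(lia)). specialize (Hm (xs n)).
  apply (Rmult_le_reg_r (2 * cos (d u v / 2))); [lra|].
  replace (t / cos (d u v / 2) * (2 * cos (d u v / 2))) with (2 * t) by (field; lra).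
  lra.
Qed.

Lemma eventually_cos_ge_perturb w z t e :
  eventually_cos_ge d xs w t -> d w z <= e -> e <= PI / 2 ->
  eventually_cos_ge d xs z (t - e).
Proof.
  destruct hcat as [[hpos [_ [_ htri]]] _].
  intros [N HN] Hwz He. exists N. intros n hn. specialize (HN n hn).
  pose proof (hadm (xs n) w). pose proof (hpos (xs n) w). pose proof (hpos w z).
  pose proof (hpos (xs n) z). pose proof (htri (xs n) w z).
  assert (cos (d (xs n) w + d w z) <= cos (d (xs n) z)) by (apply cos_decr_1; lra).
  pose proof (cos_sub_cos_shift_le (d (xs n) w) (d w z) ltac:(lra)).
  lra.
Qed.

Variable s : R.
Hypothesis hs : is_lub (fun t => exists z, eventually_cos_ge d xs z t) s.
Hypothesis hs_pos : 0 < s.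

Lemma eventually_cos_ge_near_sup eps : 0 < eps -> exists z, eventually_cos_ge d xs z (s - eps).
Proof.
  intros heps. apply NNPP. intros Hnone.
  assert (Hub : is_upper_bound (fun t => exists z, eventually_cos_ge d xs z t) (s - eps)).
  { intros t [z Hz]. apply Rnot_lt_le. intros Ht.
    apply Hnone. exists z. apply (eventually_cos_ge_weaken z t); [exact Hz | lra]. }
  pose proof (proj2 hs _ Hub). lra.
Qed.

Lemma eventually_cos_ge_le_sup_cos u v t :
  eventually_cos_ge d xs u t -> eventually_cos_ge d xs v t -> 0 < d u v ->
  t <= s * cos (d u v / 2).
Proof.
  intros Hu Hv huv. destruct (eventually_cos_ge_midpoint u v t Hu Hv huv) as [m Hm].
  assert (Hle : t / cos (d u v / 2) <= s) by (apply (proj1 hs); exists m; exact Hm).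
  assert (Hh : 0 < cos (d u v / 2)) by (apply cos_gt_0; pose proof (hadm u v); lra).
  apply (Rmult_le_compat_r (cos (d u v / 2))) in Hle; [|lra].
  replace (t / cos (d u v / 2) * cos (d u v / 2)) with t in Hle by (field; lra).
  lra.
Qed.

Lemma near_sup_cauchy (zs : nat -> X) :
  (forall k, eventually_cos_ge d xs (zs k) (s - / INR (S k))) ->
  forall eps, eps > 0 -> exists N, forall m n, (m >= N)%nat -> (n >= N)%nat ->
    d (zs m) (zs n) < eps.
Proof.
  destruct hcat as [[hpos _] _].
  intros Hzs eps heps.
  set (e := Rmin eps 1).
  assert (He : 0 < e <= 1) by (unfold e, Rmin; destruct Rle_dec; lra).
  assert (Hee : e <= eps) by apply Rmin_l.
  pose proof PI2_1.
  assert (Hce : cos (e / 2) < 1) by (rewrite <- cos_0; apply cos_decreasing_1; lra).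
  destruct (archimed_cor1 (s * (1 - cos (e / 2)))) as [N [HN HN0]]; [nra|].
  assert (Hlevel : forall k, (N <= k)%nat -> eventually_cos_ge d xs (zs k) (s - / INR N)).
  { intros k hk. apply (eventually_cos_ge_weaken _ _ _ (Hzs k)).
    enough (/ INR (S k) <= / INR N) by lra.
    apply Rinv_le_contravar; [apply lt_0_INR; lia | apply le_INR; lia]. }
  exists N. intros m n hm hn.
  destruct (Rlt_le_dec (d (zs m) (zs n)) e) as [|Hge]; [lra|].
  pose proof (hadm (zs m) (zs n)).
  pose proof (eventually_cos_ge_le_sup_cos _ _ _ (Hlevel m hm) (Hlevel n hn) ltac:(lra)).
  assert (cos (d (zs m) (zs n) / 2) <= cos (e / 2)) by (apply cos_decr_1; lra).
  nra.
Qed.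

Hypothesis hcomp : complete d.

Lemma asymptotic_center_exists : exists z, forall t, t < s -> eventually_cos_ge d xs z t.
Proof.
  destruct (functional_choice (fun k z => eventually_cos_ge d xs z (s - / INR (S k))))
    as [zs Hzs].
  { intros k. apply eventually_cos_ge_near_sup, Rinv_0_lt_compat, lt_0_INR. lia. }
  destruct (hcomp zs (near_sup_cauchy zs Hzs)) as [z Hz].
  exists z. intros t ht.
  set (e := Rmin ((s - t) / 2) 1).
  assert (He : 0 < e <= 1) by (unfold e, Rmin; destruct Rle_dec; lra).
  assert (Hee : e <= (s - t) / 2) by apply Rmin_l.
  destruct (Hz e ltac:(lra)) as [K HK].
  destruct (archimed_cor1 e) as [N [HN HN0]]; [lra|].
  set (k := max K N).
  assert (/ INR (S k) <= / INR N).
  { apply Rinv_le_contravar; [apply lt_0_INR; lia | apply le_INR; unfold k; lia]. }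
  pose proof PI2_1.
  apply (eventually_cos_ge_weaken z (s - / INR (S k) - e)); [|lra].
  apply (eventually_cos_ge_perturb (zs k)); [apply Hzs | | lra].
  left; apply HK; unfold k; lia.
Qed.

Lemma asymptotic_center_unique u v :
  (forall t, t < s -> eventually_cos_ge d xs u t) ->
  (forall t, t < s -> eventually_cos_ge d xs v t) -> u = v.
Proof.
  destruct hcat as [[hpos [hzero _]] _].
  intros Hu Hv. apply hzero.
  destruct (Req_dec (d u v) 0) as [|Hne]; [assumption|exfalso].
  assert (huv : 0 < d u v) by (pose proof (hpos u v); lra).
  pose proof (hadm u v). pose proof PI2_1.
  assert (Hc : cos (d u v / 2) < 1) by (rewrite <- cos_0; apply cos_decreasing_1; lra).
  set (t := s * (1 + cos (d u v / 2)) / 2).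
  assert (Ht : t < s) by (unfold t; nra).
  pose proof (eventually_cos_ge_le_sup_cos u v t (Hu t Ht) (Hv t Ht) huv).
  unfold t in *. nra.
Qed.

End AsymptoticCenter.

Lemma relaxation_eventually_ge (w a : nat -> R) (l t t' : R) (N : nat) :
  0 < l -> t' < t ->
  (forall n, (N <= n)%nat -> t <= a n) ->
  (forall n, exists lam, l <= lam <= 1 /\ lam * a n + (1 - lam) * w n <= w (S n)) ->
  exists M, forall n, (M <= n)%nat -> t' <= w n.
Proof.
  intros Hl Ht Ha Hw.
  assert (Hl1 : l <= 1) by (destruct (Hw 0%nat) as [lam [Hlam _]]; lra).
  set (e n := Rmax 0 (t - w n)).
  assert (He0 : forall n, 0 <= e n) by (intro; apply Rmax_l).
  assert (Hew : forall n, t - w n <= e n) by (intro; apply Rmax_r).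
  assert (Hstep : forall n, (N <= n)%nat -> e (S n) <= (1 - l) * e n).
  { intros n hn. destruct (Hw n) as [lam [Hlam Hn]].
    specialize (Ha n hn). pose proof (He0 n). pose proof (Hew n).
    apply Rmax_lub; nra. }
  assert (Hgeom : forall k, e (N + k)%nat <= (1 - l) ^ k * e N).
  { induction k as [|k IH]; [rewrite Nat.add_0_r; simpl; lra|].
    replace (N + S k)%nat with (S (N + k)) by lia.
    pose proof (Hstep (N + k)%nat ltac:(lia)). simpl. nra. }
  destruct (pow_lt_1_zero (1 - l) ltac:(rewrite Rabs_pos_eq; lra) ((t - t') / (e N + 1)))
    as [K HK].
  { apply Rdiv_lt_0_compat; [lra | pose proof (He0 N); lra]. }
  exists (N + K)%nat. intros n hn.
  replace n with (N + (n - N))%nat by lia.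
  specialize (HK (n - N)%nat ltac:(lia)).
  rewrite Rabs_pos_eq in HK by (apply pow_le; lra).
  pose proof (Hgeom (n - N)%nat). pose proof (Hew (N + (n - N))%nat). pose proof (He0 N).
  assert ((1 - l) ^ (n - N) * (e N + 1) < t - t').
  { apply (Rmult_lt_compat_r (e N + 1)) in HK; [|lra].
    replace ((t - t') / (e N + 1) * (e N + 1)) with (t - t') in HK by (field; lra). exact HK. }
  pose proof (pow_le (1 - l) (n - N) ltac:(lra)).
  nra.
Qed.

Lemma vicinal_convex_bound (X : Type) (d : X -> X -> R) (T : X -> X) :
  vicinal d T -> forall x y, cos (d (T x) x) <> 0 ->
  exists lam, cos (d (T x) x) ^ 2 / 4 <= lam <= 1 /\
    lam * cos (d (T x) y) + (1 - lam) * cos (d (T y) x) <= cos (d (T x) (T y)).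
Proof.
  intros hT x y Hx. specialize (hT x y). cbv zeta in hT.
  set (a := cos (d (T x) x) ^ 2) in *. set (b := cos (d (T y) y) ^ 2) in *.
  assert (Ha : 0 < a <= 1).
  { unfold a. rewrite <- Rsqr_pow2. pose proof (Rsqr_pos_lt _ Hx).
    pose proof (COS_bound (d (T x) x)). unfold Rsqr in *. split; nra. }
  assert (Hb : 0 <= b <= 1) by (unfold b; pose proof (COS_bound (d (T y) y)); split; nra).
  set (A := a * (1 + b)) in *. set (B := b * (1 + a)) in *.
  assert (HA : a <= A) by (unfold A; nra).
  assert (HAB : A + B <= 4) by (unfold A, B; nra).
  assert (HB : 0 <= B) by (unfold B; nra).
  assert (Hlam : A / (A + B) * (A + B) = A) by (field; lra).
  exists (A / (A + B)). split; [split|].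
  - apply (Rmult_le_reg_r (A + B)); [lra|]. rewrite Hlam. nra.
  - apply (Rmult_le_reg_r (A + B)); [lra|]. rewrite Hlam. lra.
  - apply (Rmult_le_reg_r (A + B)); [lra|].
    replace ((A / (A + B) * cos (d (T x) y) + (1 - A / (A + B)) * cos (d (T y) x)) * (A + B))
      with (A * cos (d (T x) y) + B * cos (d (T y) x)) by (field; lra).
    lra.
Qed.

Lemma vicinal_orbit_cos_ge (X : Type) (d : X -> X -> R) (T : X -> X) (x : X) (c : R) :
  is_metric d -> vicinal d T -> c < PI / 2 ->
  (forall n, d (Nat.iter (S n) T x) (Nat.iter n T x) <= c) ->
  forall z t t', eventually_cos_ge d (fun n => Nat.iter n T x) z t -> t' < t ->
  eventually_cos_ge d (fun n => Nat.iter n T x) (T z) t'.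
Proof.
  intros [hpos [_ [hsym _]]] hT hc Hstep z t t' [N HN] Ht.
  pose proof PI_RGT_0.
  assert (Hc0 : 0 <= c) by (pose proof (Hstep 0%nat); pose proof (hpos (T x) x); simpl in *; lra).
  assert (Hcc : 0 < cos c) by (apply cos_gt_0; lra).
  apply (relaxation_eventually_ge (fun n => cos (d (Nat.iter n T x) (T z)))
           (fun n => cos (d (Nat.iter (S n) T x) z)) (cos c ^ 2 / 4) t t' N).
  - simpl; nra.
  - exact Ht.
  - intros n hn. apply (HN (S n)); lia.
  - intros n.
    assert (Hcn : cos c <= cos (d (Nat.iter (S n) T x) (Nat.iter n T x))).
    { pose proof (Hstep n). pose proof (hpos (Nat.iter (S n) T x) (Nat.iter n T x)).
      apply cos_decr_1; lra. }
    destruct (vicinal_convex_bound X d T hT (Nat.iter n T x) z ltac:(simpl in *; lra))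
      as [lam [[Hlam1 Hlam2] Hlam]].
    exists lam. rewrite (hsym (T z)) in Hlam. simpl in *. split; [nra | exact Hlam].
Qed.

Lemma iter_fixed_point {X : Type} (T : X -> X) (u : X) n : T u = u -> Nat.iter n T u = u.
Proof. intros Hu. induction n as [|n IH]; simpl; [reflexivity | rewrite IH; exact Hu]. Qed.

Lemma spherically_bounded_cos_ge (X : Type) (d : X -> X -> R) (xs : nat -> X) :
  is_metric d -> spherically_bounded d xs ->
  exists z t, 0 < t /\ eventually_cos_ge d xs z t.
Proof.
  intros [hpos _] [y [c [Hc [N HN]]]].
  pose proof (hpos (xs N) y). pose proof (HN N (le_n N)). pose proof PI_RGT_0.
  exists y, (cos c). split; [apply cos_gt_0; lra|].
  exists N. intros n hn. pose proof (HN n hn). apply cos_decr_1; try apply hpos; lra.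
Qed.

Theorem theorem4p1 (X : Type) (d : X -> X -> R) (T : X -> X)
  (hcat : CAT1_space d) (hadm : admissible d) (hcomp : complete d)
  (hT : vicinal d T) :
  (exists u, Fix T u) <->
  (exists x,
     spherically_bounded d (fun n => Nat.iter n T x) /\
     exists c, c < PI / 2 /\
       forall n : nat, d (Nat.iter (S n) T x) (Nat.iter n T x) <= c).
Proof.
  pose proof hcat as [hmet _]. pose proof hmet as [_ [hzero _]].
  pose proof PI_RGT_0.
  split.
  - intros [u Hu]. exists u.
    assert (Hdu : forall n, d (Nat.iter n T u) u = 0).
    { intros n. apply hzero, iter_fixed_point, Hu. }
    split.
    + exists u, 0. split; [lra|]. exists 0%nat. intros n _. rewrite Hdu. lra.
    + exists 0. split; [lra|]. intros n. rewrite (iter_fixed_point T u n Hu), Hdu. lra.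
  - intros [x [Hbd [c [Hc Hstep]]]].
    set (xs := fun n => Nat.iter n T x).
    destruct (spherically_bounded_cos_ge X d xs hmet Hbd) as [z0 [t0 [Ht0 Hz0]]].
    destruct (completeness (fun t => exists z, eventually_cos_ge d xs z t)) as [s Hs].
    { exists 1. intros t [z Hz]. apply (eventually_cos_ge_le_1 X d xs z t Hz). }
    { exists t0, z0. exact Hz0. }
    assert (Hs0 : 0 < s) by (pose proof (proj1 Hs t0 (ex_intro _ z0 Hz0)); lra).
    destruct (asymptotic_center_exists X d xs hcat hadm s Hs Hs0 hcomp) as [z Hz].
    exists z. apply (asymptotic_center_unique X d xs hcat hadm s Hs Hs0); [|exact Hz].
    intros t Ht.
    apply (vicinal_orbit_cos_ge X d T x c hmet hT Hc Hstep z ((t + s) / 2)); [apply Hz|]; lra.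
Qed.
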